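(* Let $n\ge2$ be an integer and $f(u,\bar u)=u^n+u+\bar u$. Then $0$ is an isolated root of $f$ and \[ \operatorname{sm}(f,0)=\begin{cases}1,& n \text{ even},\\ -1,& n\equiv3\pmod 4,\\ 1,& n\equiv1\pmod 4.\end{cases} \]
   Context: For a mixed polynomial $h(u,\bar u)$ in one complex variable with isolated root $\alpha$, the multiplicity with sign $\operatorname{sm}(h,\alpha)$ is the mapping degree of $h/|h|:\{|u-\alpha|=\varepsilon\}\to S^1$ for small $\varepsilon>0$, the circle oriented counterclockwise. *)

From Stdlib Require Import Reals ZArith Arith.
From Coquelicot Require Import Coquelicot.
Open Scope R_scope.

(* A mixed polynomial in one complex variable is viewed as a function C -> C
   (of u and conj u). *)

Definition isolated_root (h : C -> C) (alpha : C) : Prop :=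
  h alpha = RtoC 0 /\
  exists eps : R, 0 < eps /\
    forall u : C, 0 < Cmod (Cminus u alpha) < eps -> h u <> RtoC 0.

Definition circ (alpha : C) (eps t : R) : C :=
  Cplus alpha (eps * cos t, eps * sin t).

(* Mapping degree of h/|h| restricted to the circle |u - alpha| = eps
   (counterclockwise), given via a continuous lift of the argument:
   deg = k iff some continuous theta with h(circ t) = |h(circ t)| e^{i theta(t)}
   on [0, 2 PI] satisfies theta(2 PI) - theta(0) = 2 PI k. *)
Definition circle_degree (h : C -> C) (alpha : C) (eps : R) (k : Z) : Prop :=
  exists theta : R -> R,
    (forall t, continuity_pt theta t) /\
    (forall t, 0 <= t <= 2 * PI ->
       h (circ alpha eps t) =
       (Cmod (h (circ alpha eps t)) * cos (theta t),
        Cmod (h (circ alpha eps t)) * sin (theta t))) /\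
    theta (2 * PI) - theta 0 = 2 * PI * IZR k.

Definition sm_eq (h : C -> C) (alpha : C) (k : Z) : Prop :=
  exists eps0 : R, 0 < eps0 /\
    forall eps, 0 < eps < eps0 -> circle_degree h alpha eps k.

Definition f_mixed (n : nat) (u : C) : C :=
  Cplus (Cplus (Cpow u n) u) (Cconj u).

(* On the circle u = eps e^(it) we have f = eps^n e^(int) + 2 eps cos t.  Turning this back by the
   angle m t, where m = +-1 is the claimed value, gives
     eps (2 cos^2 t + eps^(n-1) cos (N t),  eps^(n-1) sin (N t) - 2 m cos t sin t),   N = n - m.
   For small eps this never meets the closed negative real axis: the real part can fail to be
   positive only where cos t is small, i.e. t near PI/2 mod PI, and there cos (N t) > 0 when
   4 | N, while for odd N the imaginary part vanishes only where the real part is positive.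
   The choice of m is exactly what excludes N = 2 mod 4.  So the turned-back curve has a
   continuous principal argument with no winding, and f/|f| winds m times. *)

From Stdlib Require Import Reals ZArith Lra Lia.
From Coquelicot Require Import Coquelicot.
Open Scope R_scope.

Lemma cos_sin_add_IZR_PI (k : Z) : exists s, (s = 1 \/ s = -1) /\
  forall x, cos (x + IZR k * PI) = s * cos x /\ sin (x + IZR k * PI) = s * sin x.
Proof.
  induction k as [|k [s [Hs H]]|k [s [Hs H]]] using Z.peano_ind.
  - exists 1; split; [left; reflexivity|]. intro x; rewrite Rmult_0_l, Rplus_0_r; lra.
  - exists (-s); split; [lra|]. intro x.
    rewrite succ_IZR; replace (x + (IZR k + 1) * PI) with ((x + IZR k * PI) + PI) by ring.
    rewrite neg_cos, neg_sin; destruct (H x) as [-> ->]; lra.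
  - exists (-s); split; [lra|]. intro x.
    rewrite <- Z.sub_1_r, minus_IZR; destruct (H (x - PI)) as [Hc Hs'].
    replace (x - PI + IZR k * PI) with (x + (IZR k - 1) * PI) in Hc, Hs' by ring.
    rewrite Hc, Hs'.
    pose proof (neg_cos (x - PI)) as C; pose proof (neg_sin (x - PI)) as S.
    replace (x - PI + PI) with x in C, S by ring. rewrite C, S; lra.
Qed.

Lemma cos_sin_add_2IZR_PI (k : Z) (x : R) :
  cos (x + 2 * IZR k * PI) = cos x /\ sin (x + 2 * IZR k * PI) = sin x.
Proof.
  destruct (cos_sin_add_IZR_PI k) as [s [Hs H]].
  replace (x + 2 * IZR k * PI) with ((x + IZR k * PI) + IZR k * PI) by ring.
  destruct (H (x + IZR k * PI)) as [-> ->]; destruct (H x) as [-> ->].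
  destruct Hs; subst; split; ring.
Qed.

Lemma PI_div_2N_bounds (N : R) : 1 <= N -> 0 < PI / (2 * N) <= PI / 2.
Proof.
  intro HN; pose proof PI_RGT_0; split.
  - apply Rdiv_lt_0_compat; lra.
  - apply Rmult_le_compat_l; [lra|]. apply Rinv_le_contravar; lra.
Qed.

Lemma sin_PI_div_2N_pos (N : R) : 1 <= N -> 0 < sin (PI / (2 * N)).
Proof.
  intro HN; destruct (PI_div_2N_bounds N HN); pose proof PI_RGT_0.
  apply sin_gt_0; lra.
Qed.

Lemma decompose_PI2_add_IZR_PI (t : R) :
  exists (q : Z) (u : R), t = PI / 2 + IZR q * PI + u /\ - (PI / 2) <= u <= PI / 2.
Proof.
  pose proof PI_RGT_0.
  set (q := up ((t - PI / 2) / PI - 1 / 2)).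
  destruct (archimed ((t - PI / 2) / PI - 1 / 2)) as [H1 H2]; fold q in H1, H2.
  exists q, (t - PI / 2 - IZR q * PI); split; [ring|].
  assert (E : (t - PI / 2) / PI * PI = t - PI / 2) by (field; lra).
  split; nra.
Qed.

(* Near a zero of cos, t = PI/2 + q PI + u with u so small that u and N u lie in (-PI/2, PI/2). *)
Lemma cos_sq_lt_decompose (N t : R) : 1 <= N ->
  cos t ^ 2 < sin (PI / (2 * N)) ^ 2 ->
  exists (q : Z) (u : R), t = PI / 2 + IZR q * PI + u /\
    0 < cos u /\ 0 < cos (N * u) /\ 0 <= sin u * sin (N * u).
Proof.
  intros HN Ht; pose proof PI_RGT_0.
  destruct (PI_div_2N_bounds N HN) as [B0 B1].
  pose proof (sin_PI_div_2N_pos N HN).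
  destruct (decompose_PI2_add_IZR_PI t) as [q [u [-> Hu]]].
  exists q, u; split; [reflexivity|].
  assert (Hcos : cos (PI / 2 + IZR q * PI + u) ^ 2 = sin u ^ 2).
  { destruct (cos_sin_add_IZR_PI q) as [s [Hs Hshift]].
    replace (PI / 2 + IZR q * PI + u) with ((PI / 2 + u) + IZR q * PI) by ring.
    rewrite (proj1 (Hshift _)), cos_plus, cos_PI2, sin_PI2.
    destruct Hs; subst; ring. }
  assert (Hsmall : Rabs u < PI / (2 * N)).
  { destruct (Rlt_or_le (Rabs u) (PI / (2 * N))) as [|Hc]; [assumption|exfalso].
    assert (sin (PI / (2 * N)) <= sin (Rabs u))
      by (apply sin_incr_1; unfold Rabs in *; destruct Rcase_abs; lra).
    assert (sin (Rabs u) ^ 2 = sin u ^ 2)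
      by (unfold Rabs; destruct Rcase_abs; [rewrite sin_neg|]; ring).
    nra. }
  assert (HNu : Rabs (N * u) < PI / 2).
  { rewrite Rabs_mult, (Rabs_right N) by lra.
    apply Rlt_le_trans with (N * (PI / (2 * N))).
    - apply Rmult_lt_compat_l; lra.
    - right; field; lra. }
  apply Rabs_def2 in Hsmall, HNu.
  split; [apply cos_gt_0; lra|]; split; [apply cos_gt_0; lra|].
  destruct (Rle_or_lt 0 u).
  - assert (0 <= sin u) by (apply sin_ge_0; lra).
    assert (0 <= sin (N * u)) by (apply sin_ge_0; nra).
    nra.
  - assert (0 <= sin (- u)) by (apply sin_ge_0; lra).
    assert (0 <= sin (- (N * u))) by (apply sin_ge_0; nra).
    rewrite sin_neg in *; nra.
Qed.

Lemma cos_sq_add_cos_mul4_pos (l : nat) : (1 <= l)%nat ->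
  exists d0, 0 < d0 /\ forall d t, 0 < d < d0 ->
    0 < 2 * cos t ^ 2 + d * cos (INR (4 * l) * t).
Proof.
  intro Hl; set (N := INR (4 * l)).
  assert (HN : 1 <= N) by (unfold N; rewrite <- INR_1; apply le_INR; lia).
  pose proof (sin_PI_div_2N_pos N HN).
  exists (2 * sin (PI / (2 * N)) ^ 2); split; [nra|]. intros d t Hd.
  pose proof (COS_bound (N * t)).
  destruct (Rlt_or_le (cos t ^ 2) (sin (PI / (2 * N)) ^ 2)) as [Ht|Ht]; [|nra].
  destruct (cos_sq_lt_decompose N t HN Ht) as [q [u [-> [_ [HNu _]]]]].
  assert (E : cos (N * (PI / 2 + IZR q * PI + u)) = cos (N * u)).
  { replace (N * (PI / 2 + IZR q * PI + u))
      with (N * u + 2 * IZR (Z.of_nat l * (1 + 2 * q)) * PI)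
      by (unfold N; rewrite mult_IZR, plus_IZR, mult_IZR, <- INR_IZR_INZ, mult_INR;
          replace (INR 4) with 4 by (simpl; ring); field).
    apply cos_sin_add_2IZR_PI. }
  rewrite E; nra.
Qed.

Lemma cos_sq_add_cos_mul_odd (j : nat) :
  exists d0, 0 < d0 /\ forall d t, 0 < d < d0 ->
    0 < 2 * cos t ^ 2 + d * cos (INR (2 * j + 1) * t) \/
    d * sin (INR (2 * j + 1) * t) - 2 * cos t * sin t <> 0.
Proof.
  set (N := INR (2 * j + 1)).
  assert (HN : 1 <= N) by (unfold N; rewrite <- INR_1; apply le_INR; lia).
  pose proof (sin_PI_div_2N_pos N HN).
  exists (2 * sin (PI / (2 * N)) ^ 2); split; [nra|]. intros d t Hd.
  pose proof (COS_bound (N * t)).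
  destruct (Rlt_or_le (cos t ^ 2) (sin (PI / (2 * N)) ^ 2)) as [Ht|Ht]; [|left; nra].
  destruct (Req_dec (d * sin (N * t) - 2 * cos t * sin t) 0) as [HQ|HQ]; [left|right; exact HQ].
  destruct (cos_sq_lt_decompose N t HN Ht) as [q [u [-> [Hcu [HcNu Hsign]]]]].
  destruct (cos_sin_add_IZR_PI (Z.of_nat j + Z.of_nat (2 * j + 1) * q)) as [s [Hs HNt]].
  destruct (cos_sin_add_IZR_PI q) as [s' [Hs' Ht']].
  replace (N * (PI / 2 + IZR q * PI + u))
    with ((N * u + PI / 2) + IZR (Z.of_nat j + Z.of_nat (2 * j + 1) * q) * PI) in *
    by (unfold N; rewrite plus_IZR, mult_IZR, <- !INR_IZR_INZ, !plus_INR, mult_INR;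
        replace (INR 2) with 2 by (simpl; ring); replace (INR 1) with 1 by (simpl; ring); field).
  replace (PI / 2 + IZR q * PI + u) with ((PI / 2 + u) + IZR q * PI) in * by ring.
  destruct (HNt (N * u + PI / 2)) as [C1 S1]; destruct (Ht' (PI / 2 + u)) as [C2 S2].
  rewrite C1, C2; rewrite S1, C2, S2 in HQ.
  rewrite !cos_plus, !sin_plus, cos_PI2, sin_PI2 in *.
  assert (Hss : s * s = 1) by (destruct Hs; subst; ring).
  assert (Hss' : s' * s' = 1) by (destruct Hs'; subst; ring).
  (* the vanishing imaginary part forces s sin u < 0, hence s sin (N u) <= 0 *)
  assert (HQ' : s * d * cos (N * u) = - 2 * sin u * cos u) by nra.
  assert (s * sin u * cos u < 0) by nra.
  assert (s * sin u < 0) by nra.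
  assert (s * sin (N * u) <= 0) by nra.
  nra.
Qed.

Definition sm_f_mixed (n : nat) : Z :=
  if Nat.even n then 1%Z else if Nat.eqb (Nat.modulo n 4) 3 then (-1)%Z else 1%Z.

Lemma sub_sm_f_mixed_cases (n : nat) : (2 <= n)%nat ->
  (exists l, (1 <= l)%nat /\ INR n - IZR (sm_f_mixed n) = INR (4 * l)) \/
  (exists j, IZR (sm_f_mixed n) = 1 /\ INR n - 1 = INR (2 * j + 1)).
Proof.
  intro hn. unfold sm_f_mixed.
  pose proof (Nat.div_mod_eq n 4) as Hd; pose proof (Nat.mod_upper_bound n 4 ltac:(lia)).
  set (q := (n / 4)%nat) in *; set (r := (n mod 4)%nat) in *.
  assert (Ev : Nat.even n = Nat.even r).
  { rewrite Hd; replace (4 * q + r)%nat with (r + 2 * (2 * q))%nat by lia.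
    apply Nat.even_add_mul_2. }
  rewrite Ev.
  destruct r as [|[|[|[|r]]]]; cbn -[INR IZR Nat.mul Nat.add]; try lia.
  - right; exists (2 * q - 1)%nat; split; [reflexivity|].
    replace n with (2 * (2 * q - 1) + 1 + 1)%nat by lia; rewrite plus_INR; simpl (INR 1); ring.
  - left; exists q; split; [lia|].
    replace n with (4 * q + 1)%nat by lia; rewrite plus_INR; simpl (INR 1); ring.
  - right; exists (2 * q)%nat; split; [reflexivity|].
    replace n with (2 * (2 * q) + 1 + 1)%nat by lia; rewrite plus_INR; simpl (INR 1); ring.
  - left; exists (q + 1)%nat; split; [lia|].
    replace (4 * (q + 1))%nat with (n + 1)%nat by lia; rewrite plus_INR; simpl (INR 1); ring.
Qed.

(* Principal argument in (-PI, PI), via the half-angle formula tan (a / 2) = y / (|z| + x);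
   it is continuous off the closed negative real axis. *)
Definition Arg (z : C) : R := 2 * atan (snd z / (Cmod z + fst z)).

Lemma Cmod_sqr (z : C) : Cmod z ^ 2 = fst z ^ 2 + snd z ^ 2.
Proof. apply pow2_sqrt; nra. Qed.

Lemma Cmod_add_fst_pos (z : C) : 0 < fst z \/ snd z <> 0 -> 0 < Cmod z + fst z.
Proof.
  intros [Hx|Hy]; pose proof (Cmod_sqr z); pose proof (Cmod_ge_0 z); [lra|].
  assert (0 < snd z ^ 2) by (apply pow2_gt_0; exact Hy).
  nra.
Qed.

Lemma cos_sin_2atan (T : R) :
  cos (2 * atan T) = (1 - T ^ 2) / (1 + T ^ 2) /\ sin (2 * atan T) = 2 * T / (1 + T ^ 2).
Proof.
  rewrite cos_2a, sin_2a, sin_atan, cos_atan.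
  set (s := sqrt (1 + T²)).
  assert (Hs : s ^ 2 = 1 + T ^ 2) by (unfold s; rewrite pow2_sqrt; unfold Rsqr; [ring | nra]).
  assert (0 < s) by (apply sqrt_lt_R0; unfold Rsqr; nra).
  split; field_simplify_eq; try rewrite Hs; try ring; split; nra.
Qed.

Lemma polar_Arg (z : C) : 0 < Cmod z + fst z ->
  z = (Cmod z * cos (Arg z), Cmod z * sin (Arg z)).
Proof.
  intro H; pose proof (Cmod_sqr z) as Hr; revert H Hr.
  destruct z as [P Q]; unfold Arg; simpl fst; simpl snd.
  set (r := Cmod (P, Q)); intros H Hr.
  destruct (cos_sin_2atan (Q / (r + P))) as [-> ->].
  assert (r + P <> 0) by lra.
  assert (r <> 0) by (intro E; rewrite E in Hr; nra).
  f_equal; field_simplify_eq; rewrite ?Hr; try ring; try split; nra.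
Qed.

Lemma circ_0 (r t : R) : circ (RtoC 0) r t = (r * cos t, r * sin t).
Proof. unfold circ, Cplus, RtoC; simpl; f_equal; ring. Qed.

Lemma polar_circ (u : C) : exists t, u = circ (RtoC 0) (Cmod u) t.
Proof.
  destruct (Rlt_or_le 0 (Cmod u + fst u)) as [H|H].
  - exists (Arg u); rewrite circ_0; exact (polar_Arg u H).
  - exists PI; rewrite circ_0, cos_PI, sin_PI.
    pose proof (Cmod_sqr u); pose proof (Cmod_ge_0 u).
    assert (Hx : fst u = - Cmod u)
      by (pose proof (re_le_Cmod u); unfold Re, Rabs in *; destruct Rcase_abs; lra).
    assert (Hy : snd u = 0) by (rewrite Hx in *; nra).
    destruct u as [x y]; simpl in Hx, Hy; subst y; f_equal; lra.
Qed.

Lemma continuous_pow2_comp (f : R -> R) (t : R) :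
  continuous f t -> continuous (fun s => f s ^ 2) t.
Proof.
  intro Hf.
  apply (@continuous_comp R_UniformSpace R_UniformSpace R_UniformSpace f (fun x => x ^ 2));
    [exact Hf|].
  apply (ex_derive_continuous (K := R_AbsRing) (V := R_NormedModule) (fun x => x ^ 2)).
  auto_derive; trivial.
Qed.

Lemma continuity_pt_Arg (g : R -> C) (t : R) :
  continuity_pt (fun s => fst (g s)) t -> continuity_pt (fun s => snd (g s)) t ->
  0 < Cmod (g t) + fst (g t) -> continuity_pt (fun s => Arg (g s)) t.
Proof.
  set (a := fun s => fst (g s)); set (b := fun s => snd (g s)).
  rewrite !continuity_pt_filterlim; intros Ha Hb H.
  change (continuous (fun s => 2 * atan (b s / (sqrt (a s ^ 2 + b s ^ 2) + a s))) t).
  change (0 < sqrt (a t ^ 2 + b t ^ 2) + a t) in H.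
  apply (continuous_mult (fun _ => 2) (fun s => atan (b s / (sqrt (a s ^ 2 + b s ^ 2) + a s))));
    [apply continuous_const|].
  apply continuous_atan_comp, (continuous_mult b (fun s => / (sqrt (a s ^ 2 + b s ^ 2) + a s)));
    [exact Hb|].
  apply continuous_Rinv_comp; [|lra].
  apply (continuous_plus (fun s => sqrt (a s ^ 2 + b s ^ 2)) a); [|exact Ha].
  apply continuous_sqrt_comp, (continuous_plus (fun s => a s ^ 2) (fun s => b s ^ 2)).
  all: apply continuous_pow2_comp; assumption.
Qed.

Lemma polar_of_rotated (a : R) (w : C) :
  0 < Cmod (Cmult (cos a, - sin a) w) + fst (Cmult (cos a, - sin a) w) ->
  w = (Cmod w * cos (a + Arg (Cmult (cos a, - sin a) w)),
       Cmod w * sin (a + Arg (Cmult (cos a, - sin a) w))).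
Proof.
  set (g := Cmult (cos a, - sin a) w); intro H.
  pose proof (sin2_cos2 a) as Hpyth; unfold Rsqr in Hpyth.
  assert (Hmod : Cmod g = Cmod w).
  { unfold g; rewrite Cmod_mult.
    replace (Cmod (cos a, - sin a)) with 1; [ring|].
    unfold Cmod; simpl fst; simpl snd.
    replace (cos a ^ 2 + (- sin a) ^ 2) with 1 by nra; symmetry; apply sqrt_1. }
  pose proof (polar_Arg g H) as Hg; rewrite Hmod in Hg.
  set (A := Arg g) in *; set (r := Cmod w) in *.
  destruct w as [X Y]; unfold g, Cmult in Hg; simpl fst in Hg; simpl snd in Hg.
  injection Hg as E1 E2.
  rewrite cos_plus, sin_plus; f_equal.
  - transitivity (cos a * (r * cos A) - sin a * (r * sin A)); [|ring].
    rewrite <- E1, <- E2.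
    transitivity (X * (sin a * sin a + cos a * cos a)); [rewrite Hpyth|]; ring.
  - transitivity (sin a * (r * cos A) + cos a * (r * sin A)); [|ring].
    rewrite <- E1, <- E2.
    transitivity (Y * (sin a * sin a + cos a * cos a)); [rewrite Hpyth|]; ring.
Qed.

Definition unwound (h : C -> C) (alpha : C) (eps : R) (k : Z) (t : R) : C :=
  Cmult (cos (IZR k * t), - sin (IZR k * t)) (h (circ alpha eps t)).

Lemma continuity_pt_unwound (h : C -> C) alpha eps k t :
  continuity_pt (fun s => fst (h (circ alpha eps s))) t ->
  continuity_pt (fun s => snd (h (circ alpha eps s))) t ->
  continuity_pt (fun s => fst (unwound h alpha eps k s)) t /\
  continuity_pt (fun s => snd (unwound h alpha eps k s)) t.
Proof.
  unfold unwound, Cmult; simpl fst; simpl snd.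
  assert (continuity_pt (fun s => cos (IZR k * s)) t)
    by (apply continuity_pt_filterlim, (ex_derive_continuous (fun s => cos (IZR k * s)));
        auto_derive; trivial).
  assert (continuity_pt (fun s => - sin (IZR k * s)) t)
    by (apply continuity_pt_filterlim, (ex_derive_continuous (fun s => - sin (IZR k * s)));
        auto_derive; trivial).
  intros HX HY; split.
  - apply continuity_pt_minus; apply continuity_pt_mult; assumption.
  - apply continuity_pt_plus; apply continuity_pt_mult; assumption.
Qed.

Lemma unwound_2PI (h : C -> C) alpha eps k :
  unwound h alpha eps k (2 * PI) = unwound h alpha eps k 0.
Proof.
  assert (Hcirc : circ alpha eps (2 * PI) = circ alpha eps 0)
    by (unfold circ; rewrite cos_2PI, sin_2PI, cos_0, sin_0; reflexivity).
  destruct (cos_sin_add_2IZR_PI k 0) as [Hc Hs].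
  replace (0 + 2 * IZR k * PI) with (IZR k * (2 * PI)) in Hc, Hs by ring.
  unfold unwound; rewrite Hcirc, Hc, Hs, Rmult_0_r; reflexivity.
Qed.

Lemma circle_degree_of_unwound (h : C -> C) (alpha : C) (eps : R) (k : Z) :
  (forall t, continuity_pt (fun s => fst (h (circ alpha eps s))) t) ->
  (forall t, continuity_pt (fun s => snd (h (circ alpha eps s))) t) ->
  (forall t, 0 < fst (unwound h alpha eps k t) \/ snd (unwound h alpha eps k t) <> 0) ->
  circle_degree h alpha eps k.
Proof.
  intros HX HY Hoff.
  set (g := unwound h alpha eps k).
  assert (Hg : forall t, 0 < Cmod (g t) + fst (g t)) by (intro; apply Cmod_add_fst_pos, Hoff).
  exists (fun t => IZR k * t + Arg (g t)); split; [|split].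
  - intro t; destruct (continuity_pt_unwound h alpha eps k t (HX t) (HY t)).
    apply continuity_pt_plus.
    + apply continuity_pt_mult; [|apply continuity_pt_id].
      apply continuity_pt_const; intros ??; reflexivity.
    + apply continuity_pt_Arg; auto.
  - intros t _; exact (polar_of_rotated (IZR k * t) _ (Hg t)).
  - unfold g; rewrite unwound_2PI; ring.
Qed.

Lemma Cpow_polar (r t : R) (n : nat) :
  Cpow (r * cos t, r * sin t) n = (r ^ n * cos (INR n * t), r ^ n * sin (INR n * t)).
Proof.
  induction n as [|n IHn].
  - simpl; rewrite Rmult_0_l, cos_0, sin_0; unfold RtoC; f_equal; ring.
  - simpl Cpow; rewrite IHn; unfold Cmult; simpl fst; simpl snd.
    rewrite S_INR; replace ((INR n + 1) * t) with (INR n * t + t) by ring.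
    rewrite cos_plus, sin_plus; f_equal; simpl; ring.
Qed.

Lemma f_mixed_circ (n : nat) (eps t : R) :
  f_mixed n (circ (RtoC 0) eps t) =
  (eps ^ n * cos (INR n * t) + 2 * eps * cos t, eps ^ n * sin (INR n * t)).
Proof.
  rewrite circ_0; unfold f_mixed; rewrite Cpow_polar.
  unfold Cplus, Cconj; simpl; f_equal; ring.
Qed.

Lemma continuity_pt_f_mixed_circ (n : nat) (eps t : R) :
  continuity_pt (fun s => fst (f_mixed n (circ (RtoC 0) eps s))) t /\
  continuity_pt (fun s => snd (f_mixed n (circ (RtoC 0) eps s))) t.
Proof.
  split.
  - apply (continuity_pt_ext (fun s => eps ^ n * cos (INR n * s) + 2 * eps * cos s));
      [intro s; rewrite f_mixed_circ; reflexivity|].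
    apply continuity_pt_filterlim,
      (ex_derive_continuous (fun s => eps ^ n * cos (INR n * s) + 2 * eps * cos s)).
    auto_derive; trivial.
  - apply (continuity_pt_ext (fun s => eps ^ n * sin (INR n * s)));
      [intro s; rewrite f_mixed_circ; reflexivity|].
    apply continuity_pt_filterlim, (ex_derive_continuous (fun s => eps ^ n * sin (INR n * s))).
    auto_derive; trivial.
Qed.

Lemma unwound_f_mixed (n : nat) (eps : R) (m : Z) (t : R) :
  (1 <= n)%nat -> IZR m = 1 \/ IZR m = -1 ->
  unwound (f_mixed n) (RtoC 0) eps m t =
  (eps * (2 * cos t ^ 2 + eps ^ (n - 1) * cos ((INR n - IZR m) * t)),
   eps * (eps ^ (n - 1) * sin ((INR n - IZR m) * t) - 2 * IZR m * cos t * sin t)).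
Proof.
  intros Hn Hm; unfold unwound; rewrite f_mixed_circ; unfold Cmult; simpl fst; simpl snd.
  replace (eps ^ n) with (eps * eps ^ (n - 1))
    by (destruct n; [lia|]; simpl; rewrite Nat.sub_0_r; reflexivity).
  replace ((INR n - IZR m) * t) with (INR n * t - IZR m * t) by ring.
  rewrite cos_minus, sin_minus.
  destruct Hm as [-> | ->];
    [rewrite Rmult_1_l | replace (-1 * t) with (- t) by ring; rewrite cos_neg, sin_neg];
    f_equal; ring.
Qed.

Lemma pow_pos_le (e : R) (k : nat) : 0 < e < 1 -> (1 <= k)%nat -> 0 < e ^ k <= e.
Proof.
  intros He Hk; split; [apply pow_lt; lra|].
  destruct k as [|k]; [lia|]; simpl.
  destruct k as [|k]; [simpl; lra|].
  assert (e ^ S k < 1) by (apply pow_lt_1_compat; [lra | lia]).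
  nra.
Qed.

Lemma f_mixed_unwound_off_axis (n : nat) : (2 <= n)%nat ->
  exists eps0, 0 < eps0 /\ forall eps t, 0 < eps < eps0 ->
    0 < fst (unwound (f_mixed n) (RtoC 0) eps (sm_f_mixed n) t) \/
    snd (unwound (f_mixed n) (RtoC 0) eps (sm_f_mixed n) t) <> 0.
Proof.
  intro hn.
  assert (Hm : IZR (sm_f_mixed n) = 1 \/ IZR (sm_f_mixed n) = -1)
    by (unfold sm_f_mixed; destruct Nat.even; [|destruct Nat.eqb]; simpl; lra).
  assert (Hgap : exists d0, 0 < d0 /\ forall d t, 0 < d < d0 ->
    0 < 2 * cos t ^ 2 + d * cos ((INR n - IZR (sm_f_mixed n)) * t) \/
    d * sin ((INR n - IZR (sm_f_mixed n)) * t) - 2 * IZR (sm_f_mixed n) * cos t * sin t <> 0).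
  { destruct (sub_sm_f_mixed_cases n hn) as [[l [Hl ->]] | [j [-> ->]]].
    - destruct (cos_sq_add_cos_mul4_pos l Hl) as [d0 [Hd0 H]].
      exists d0; split; [exact Hd0|]; left; auto.
    - destruct (cos_sq_add_cos_mul_odd j) as [d0 [Hd0 H]].
      exists d0; split; [exact Hd0|]; rewrite Rmult_1_r; auto. }
  destruct Hgap as [d0 [Hd0 Hgap]].
  exists (Rmin 1 d0); split; [apply Rmin_glb_lt; lra|]; intros eps t [He0 He].
  pose proof (Rmin_l 1 d0); pose proof (Rmin_r 1 d0).
  destruct (pow_pos_le eps (n - 1) ltac:(lra) ltac:(lia)).
  rewrite unwound_f_mixed by (lia || exact Hm); simpl fst; simpl snd.
  destruct (Hgap (eps ^ (n - 1)) t ltac:(lra)) as [HP|HQ].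
  - left; apply Rmult_lt_0_compat; lra.
  - right; apply Rmult_integral_contrapositive; split; lra.
Qed.

Theorem mainTheorem8 (n : nat) (hn : (2 <= n)%nat) :
  isolated_root (f_mixed n) (RtoC 0) /\
  sm_eq (f_mixed n) (RtoC 0)
    (if Nat.even n then 1%Z
     else if Nat.eqb (Nat.modulo n 4) 3 then (-1)%Z
     else 1%Z).
Proof.
  change (if Nat.even n then 1%Z else if Nat.eqb (Nat.modulo n 4) 3 then (-1)%Z else 1%Z)
    with (sm_f_mixed n).
  destruct (f_mixed_unwound_off_axis n hn) as [eps0 [He0 Hoff]].
  split; [split|].
  - unfold f_mixed, Cplus, Cconj, RtoC; destruct n as [|n]; [lia|]; simpl; f_equal; ring.
  - exists eps0; split; [exact He0|]; intros u Hu Hz.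
    replace (Cminus u (RtoC 0)) with u in Hu
      by (destruct u; unfold Cminus, Cplus, Copp, RtoC; simpl; f_equal; ring).
    destruct (polar_circ u) as [t Ht].
    destruct (Hoff (Cmod u) t Hu) as [H | H];
      unfold unwound in H; rewrite <- Ht, Hz, Cmult_0_r in H; simpl in H; lra.
  - exists eps0; split; [exact He0|]; intros eps He.
    apply circle_degree_of_unwound; intro t;
      [apply continuity_pt_f_mixed_circ | apply continuity_pt_f_mixed_circ | apply Hoff, He].
Qed.
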